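(* Let $a<b$, $n\ge1$ an integer, $y\in C^1[a,b]$, and $x_k=a+\tfrac{k}{n}(b-a)$ for $0\le k\le n$. Then \[\sup_{x\in[a,b]}|y(x)|\le \max_{0\le k\le n-1}\Bigl\{\tfrac12\bigl|y(x_k)+y(x_{k+1})\bigr|+\tfrac12\sqrt{\tfrac{b-a}{n}}\Bigl(\int_{x_k}^{x_{k+1}}y'(t)^2\,dt\Bigr)^{1/2}\Bigr\}.\] *)

From Stdlib Require Import Reals Lra Lia.
From Coquelicot Require Import Coquelicot.
Open Scope R_scope.

Definition deriv_within (a b : R) (f : R -> R) (x d : R) : Prop :=
  forall eps : R, 0 < eps -> exists delta : R, 0 < delta /\
    forall t : R, a <= t <= b -> t <> x -> Rabs (t - x) < delta ->
      Rabs ((f t - f x) / (t - x) - d) < eps.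

Definition cont_on (a b : R) (g : R -> R) : Prop :=
  forall x : R, a <= x <= b ->
  forall eps : R, 0 < eps -> exists delta : R, 0 < delta /\
    forall t : R, a <= t <= b -> Rabs (t - x) < delta -> Rabs (g t - g x) < eps.

Definition C1_on (a b : R) (y y' : R -> R) : Prop :=
  (forall x : R, a <= x <= b -> deriv_within a b y x (y' x)) /\ cont_on a b y'.

Fixpoint maxk (f : nat -> R) (m : nat) : R :=
  match m with
  | O => f O
  | S p => Rmax (maxk f p) (f (S p))
  end.

Definition grid (a b : R) (n k : nat) : R := a + INR k / INR n * (b - a).

From Stdlib Require Import Reals Lra Lia.
From Coquelicot Require Import Coquelicot.
Open Scope R_scope.

(* On a cell [r, s] of the grid, 2 y(x) = y(r) + y(s) + \int_r^x y' - \int_x^s y', so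
   |y(x)| <= |y(r) + y(s)| / 2 + (\int_r^s |y'|) / 2, and Cauchy-Schwarz bounds
   \int_r^s |y'| by sqrt (s - r) (\int_r^s y'^2)^(1/2).  The fundamental theorem of
   calculus is obtained from the mean value theorem applied to y minus a primitive of y'. *)

(* Coquelicot's derivatives and integrals want functions continuous on all of R;
   composing with [clamp a b] extends a function on [a, b] by its endpoint values. *)
Definition clamp (a b t : R) : R := Rmax a (Rmin b t).

Lemma clamp_in a b t : a <= b -> a <= clamp a b t <= b.
Proof. intros; unfold clamp, Rmax, Rmin; repeat destruct Rle_dec; lra. Qed.

Lemma clamp_id a b t : a <= t <= b -> clamp a b t = t.
Proof. intros; unfold clamp, Rmax, Rmin; repeat destruct Rle_dec; lra. Qed.

Lemma clamp_lipschitz a b t s : a <= b -> Rabs (clamp a b t - clamp a b s) <= Rabs (t - s).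
Proof.
  intros; unfold clamp, Rmax, Rmin; repeat destruct Rle_dec;
    unfold Rabs; repeat destruct Rcase_abs; lra.
Qed.

Lemma continuous_cont_on_clamp a b g x :
  a <= b -> cont_on a b g -> continuous (fun t => g (clamp a b t)) x.
Proof.
  intros Hab Hg; apply continuity_pt_filterlim, continuity_pt_locally; intros eps.
  destruct (Hg (clamp a b x) (clamp_in a b x Hab) eps (cond_pos eps)) as [d [Hd Hnear]].
  exists (mkposreal d Hd); intros u Hu; apply Hnear; [now apply clamp_in |].
  exact (Rle_lt_trans _ _ _ (clamp_lipschitz a b u x Hab) Hu).
Qed.

Lemma ex_RInt_cont_on (phi : R -> R) a b g r s :
  a <= r <= b -> a <= s <= b -> cont_on a b g -> (forall u, continuous phi u) ->
  ex_RInt (fun t => phi (g t)) r s.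
Proof.
  intros Hr Hs Hg Hphi.
  apply ex_RInt_ext with (fun t => phi (g (clamp a b t))).
  - intros t Ht; rewrite clamp_id; [reflexivity |].
    destruct (Rle_dec r s); [rewrite Rmin_left, Rmax_right in Ht | rewrite Rmin_right, Rmax_left in Ht]; lra.
  - apply (@ex_RInt_continuous R_CompleteNormedModule); intros t _.
    apply continuous_comp; [apply continuous_cont_on_clamp; [lra | exact Hg] | apply Hphi].
Qed.

Lemma continuous_sqr u : continuous (fun v => v ^ 2) u.
Proof. apply (@ex_derive_continuous R_AbsRing R_NormedModule); auto_derive; auto. Qed.

Lemma deriv_within_cont_on a b f f' :
  (forall x, a <= x <= b -> deriv_within a b f x (f' x)) -> cont_on a b f.
Proof.
  intros Hd x Hx eps Heps.
  destruct (Hd x Hx 1 Rlt_0_1) as [d [Hd0 Hquot]].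
  set (L := Rabs (f' x) + 1).
  assert (HL : 0 < L) by (pose proof (Rabs_pos (f' x)); unfold L; lra).
  exists (Rmin d (eps / L)); split; [apply Rmin_pos; [lra | apply Rdiv_lt_0_compat; lra] |].
  intros t Ht Htx.
  destruct (Req_dec t x) as [-> | Hne]; [rewrite Rminus_diag, Rabs_R0; lra |].
  assert (Hd' : Rabs (t - x) < d) by exact (Rlt_le_trans _ _ _ Htx (Rmin_l _ _)).
  assert (HeL : Rabs (t - x) < eps / L) by exact (Rlt_le_trans _ _ _ Htx (Rmin_r _ _)).
  set (q := (f t - f x) / (t - x)).
  assert (Hq : Rabs q <= L).
  { pose proof (Hquot t Ht Hne Hd') as Hclose.
    pose proof (Rabs_triang (q - f' x) (f' x)).
    replace (q - f' x + f' x) with q in * by ring; fold q in Hclose; unfold L; lra. }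
  replace (f t - f x) with (q * (t - x)) by (unfold q; field; lra).
  rewrite Rabs_mult.
  apply Rle_lt_trans with (L * Rabs (t - x)); [apply Rmult_le_compat_r; [apply Rabs_pos | lra] |].
  replace eps with (L * (eps / L)) by (field; lra).
  apply Rmult_lt_compat_l; lra.
Qed.

Lemma is_derive_clamp a b y y' t :
  (forall x, a <= x <= b -> deriv_within a b y x (y' x)) -> a < t < b ->
  is_derive (fun u => y (clamp a b u)) t (y' t).
Proof.
  intros Hd Ht; apply is_derive_Reals; intros eps Heps.
  destruct (Hd t ltac:(lra) eps Heps) as [d [Hd0 Hquot]].
  assert (Hpos : 0 < Rmin d (Rmin (t - a) (b - t))) by (repeat apply Rmin_pos; lra).
  exists (mkposreal _ Hpos); intros h Hh0 Hh; simpl in Hh.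
  pose proof (Rmin_l d (Rmin (t - a) (b - t))).
  pose proof (Rmin_r d (Rmin (t - a) (b - t))).
  pose proof (Rmin_l (t - a) (b - t)). pose proof (Rmin_r (t - a) (b - t)).
  assert (Hin : - (t - a) < h < b - t) by (apply Rabs_def2 in Hh as [? ?]; lra).
  rewrite !clamp_id by lra.
  replace h with (t + h - t) at 2 by ring.
  apply Hquot; [lra | lra |]. replace (t + h - t) with h by ring; lra.
Qed.

Lemma RInt_C1_on a b y y' r s :
  C1_on a b y y' -> a <= r -> r <= s -> s <= b -> y s - y r = RInt y' r s.
Proof.
  intros [Hd Hc] Har Hrs Hsb.
  set (z := fun t => y' (clamp a b t)).
  assert (Hz : forall u, continuous z u) by (intros; apply continuous_cont_on_clamp; [lra | exact Hc]).
  assert (HdI : forall u, is_derive (RInt z r) u (z u)).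
  { intros u; apply (@is_derive_RInt R_CompleteNormedModule z (RInt z r) r u); [| apply Hz].
    apply filter_forall; intros v; apply RInt_correct, (@ex_RInt_continuous R_CompleteNormedModule).
    intros; apply Hz. }
  set (F := fun t => y (clamp a b t) - RInt z r t).
  destruct (MVT_gen F r s (fun _ => 0)) as [c [_ HF]]; rewrite ?Rmin_left, ?Rmax_right by lra.
  - intros t Ht; unfold F; replace 0 with (y' t - z t) by (unfold z; rewrite clamp_id by lra; ring).
    apply (is_derive_minus (fun u => y (clamp a b u)) (RInt z r)); [| apply HdI].
    apply is_derive_clamp; [exact Hd | lra].
  - intros t _; apply continuity_pt_minus.
    + apply continuity_pt_filterlim, continuous_cont_on_clamp; [lra | exact (deriv_within_cont_on a b y y' Hd)].
    + apply continuity_pt_filterlim, (@ex_derive_continuous R_AbsRing R_NormedModule).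
      eexists; apply HdI.
  - unfold F in HF; rewrite RInt_point, !clamp_id in HF by lra.
    replace (RInt y' r s) with (RInt z r s); [unfold zero in HF; simpl in HF; lra |].
    apply RInt_ext; rewrite Rmin_left, Rmax_right by lra; intros t Ht.
    unfold z; rewrite clamp_id by lra; reflexivity.
Qed.

Lemma Rabs_le_AM_GM c w : 0 < c -> Rabs w <= c / 2 * w ^ 2 + / (2 * c).
Proof.
  intros Hc; rewrite <- (pow2_abs w).
  assert (0 <= (c * Rabs w - 1) ^ 2 / (2 * c)) by (apply Rdiv_le_0_compat; [apply pow2_ge_0 | lra]).
  replace (c / 2 * Rabs w ^ 2 + / (2 * c))
    with (Rabs w + (c * Rabs w - 1) ^ 2 / (2 * c)) by (field; lra).
  lra.
Qed.

(* Optimizing the AM-GM parameter: [c = sqrt h / sqrt I] when [I > 0]. *)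
Lemma le_sqrt_mul_of_AM_GM D I h : 0 <= I -> 0 < h ->
  (forall c, 0 < c -> D <= c / 2 * I + h / (2 * c)) -> D <= sqrt h * sqrt I.
Proof.
  intros HI Hh Hc; destruct (Req_dec I 0) as [-> | HI0].
  - rewrite sqrt_0, Rmult_0_r; apply Rnot_lt_le; intros HD.
    specialize (Hc (h / D) ltac:(apply Rdiv_lt_0_compat; lra)).
    replace (h / D / 2 * 0 + h / (2 * (h / D))) with (D / 2) in Hc by (field; lra); lra.
  - pose proof (sqrt_lt_R0 I ltac:(lra)); pose proof (sqrt_lt_R0 h Hh).
    specialize (Hc (sqrt h / sqrt I) ltac:(apply Rdiv_lt_0_compat; lra)).
    rewrite <- (sqrt_sqrt I), <- (sqrt_sqrt h) in Hc at 2 by lra.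
    replace (sqrt h / sqrt I / 2 * (sqrt I * sqrt I) + sqrt h * sqrt h / (2 * (sqrt h / sqrt I)))
      with (sqrt h * sqrt I) in Hc by (field; lra).
    exact Hc.
Qed.

(* Cauchy-Schwarz, by integrating the pointwise AM-GM bound. *)
Lemma RInt_abs_le_sqrt f r s : r < s ->
  ex_RInt (fun t => Rabs (f t)) r s -> ex_RInt (fun t => f t ^ 2) r s ->
  RInt (fun t => Rabs (f t)) r s <= sqrt (s - r) * sqrt (RInt (fun t => f t ^ 2) r s).
Proof.
  intros Hrs Habs Hsq.
  apply le_sqrt_mul_of_AM_GM; [apply RInt_ge_0; [lra | exact Hsq | intros; apply pow2_ge_0] | lra |].
  intros c Hc.
  assert (Hbound : is_RInt (fun t => c / 2 * f t ^ 2 + / (2 * c)) r s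
                     (c / 2 * RInt (fun t => f t ^ 2) r s + (s - r) / (2 * c))).
  { replace ((s - r) / (2 * c)) with (scal (s - r) (/ (2 * c))) by (unfold scal; simpl; unfold mult; simpl; field; lra).
    apply (is_RInt_plus (fun t => c / 2 * f t ^ 2) (fun _ => / (2 * c))).
    - apply (is_RInt_scal (fun t => f t ^ 2)), (@RInt_correct R_CompleteNormedModule), Hsq.
    - apply (@is_RInt_const R_NormedModule). }
  rewrite <- (is_RInt_unique _ _ _ _ Hbound).
  apply RInt_le; [lra | exact Habs | eexists; exact Hbound |].
  intros; apply Rabs_le_AM_GM, Hc.
Qed.

Lemma abs_le_half_sum_RInt_abs a b y y' r s x :
  C1_on a b y y' -> a <= r -> s <= b -> r <= x <= s ->
  Rabs (y x) <= / 2 * Rabs (y r + y s) + / 2 * RInt (fun t => Rabs (y' t)) r s.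
Proof.
  intros HC Har Hsb Hx; pose proof HC as [_ Hc].
  assert (Hint : forall u v, r <= u <= v -> v <= s -> ex_RInt y' u v)
    by (intros; exact (ex_RInt_cont_on (fun w => w) a b y' u v ltac:(lra) ltac:(lra) Hc continuous_id)).
  assert (Hint_abs : forall u v, r <= u <= v -> v <= s -> ex_RInt (fun t => Rabs (y' t)) u v)
    by (intros; exact (ex_RInt_cont_on Rabs a b y' u v ltac:(lra) ltac:(lra) Hc continuous_Rabs)).
  assert (Hsplit : y x = / 2 * (y r + y s) + / 2 * (RInt y' r x - RInt y' x s)).
  { pose proof (RInt_C1_on a b y y' r x HC Har (proj1 Hx) ltac:(lra)).
    pose proof (RInt_C1_on a b y y' x s HC ltac:(lra) (proj2 Hx) Hsb). lra. }
  pose proof (abs_RInt_le y' r x (proj1 Hx) (Hint r x ltac:(lra) ltac:(lra))).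
  pose proof (abs_RInt_le y' x s (proj2 Hx) (Hint x s ltac:(lra) ltac:(lra))).
  pose proof (RInt_Chasles (fun t => Rabs (y' t)) r x s
                (Hint_abs r x ltac:(lra) ltac:(lra)) (Hint_abs x s ltac:(lra) ltac:(lra))) as Hchasles.
  rewrite Hsplit, <- !Rmult_plus_distr_l, Rabs_mult, (Rabs_pos_eq (/ 2)) by lra.
  apply Rmult_le_compat_l; [lra |].
  eapply Rle_trans; [apply Rabs_triang | apply Rplus_le_compat_l].
  rewrite <- Hchasles; unfold Rminus, plus; simpl.
  eapply Rle_trans; [apply Rabs_triang |]; rewrite Rabs_Ropp; lra.
Qed.

Lemma abs_le_half_sum_energy a b y y' r s x :
  C1_on a b y y' -> a <= r -> r < s -> s <= b -> r <= x <= s ->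
  Rabs (y x) <= / 2 * Rabs (y r + y s)
                + / 2 * sqrt (s - r) * sqrt (RInt (fun t => y' t ^ 2) r s).
Proof.
  intros HC Har Hrs Hsb Hx; pose proof HC as [_ Hc].
  eapply Rle_trans; [exact (abs_le_half_sum_RInt_abs a b y y' r s x HC Har Hsb Hx) |].
  rewrite Rmult_assoc; apply Rplus_le_compat_l, Rmult_le_compat_l; [lra |].
  apply RInt_abs_le_sqrt; [exact Hrs | |].
  - exact (ex_RInt_cont_on Rabs a b y' r s ltac:(lra) ltac:(lra) Hc continuous_Rabs).
  - exact (ex_RInt_cont_on (fun w => w ^ 2) a b y' r s ltac:(lra) ltac:(lra) Hc continuous_sqr).
Qed.

Lemma maxk_ge f m k : (k <= m)%nat -> f k <= maxk f m.
Proof.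
  induction m as [| m IH]; intros Hk; simpl.
  - replace k with 0%nat by lia; lra.
  - destruct (Nat.eq_dec k (S m)) as [-> | Hne]; [apply Rmax_r |].
    eapply Rle_trans; [apply IH; lia | apply Rmax_l].
Qed.

Lemma grid_S a b n k : (1 <= n)%nat -> grid a b n (S k) = grid a b n k + (b - a) / INR n.
Proof.
  intros Hn; assert (0 < INR n) by (apply lt_0_INR; lia).
  unfold grid; rewrite S_INR; field; lra.
Qed.

Lemma grid_bounds a b n k : a < b -> (k < n)%nat ->
  a <= grid a b n k /\ grid a b n (S k) <= b.
Proof.
  intros Hab Hk; assert (0 < INR n) by (apply lt_0_INR; lia).
  assert (0 <= INR k / INR n) by (apply Rdiv_le_0_compat; [apply pos_INR | lra]).
  assert (INR (S k) / INR n <= 1).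
  { apply (Rmult_le_reg_r (INR n)); [lra |].
    replace (INR (S k) / INR n * INR n) with (INR (S k)) by (field; lra).
    rewrite Rmult_1_l; apply le_INR; lia. }
  unfold grid; split; nra.
Qed.

Lemma grid_cell a b n x : (1 <= n)%nat -> a <= x <= b ->
  exists k, (k < n)%nat /\ grid a b n k <= x <= grid a b n (S k).
Proof.
  intros Hn Hx; assert (0 < INR n) by (apply lt_0_INR; lia).
  enough (Hcover : forall m, (1 <= m)%nat -> x <= grid a b n m ->
            exists k, (k < m)%nat /\ grid a b n k <= x <= grid a b n (S k)).
  { apply Hcover; [exact Hn |]; unfold grid; rewrite Rdiv_diag by lra; lra. }
  induction m as [| m IH]; intros Hm Hxm; [lia |].
  destruct (Nat.eq_dec m 0) as [-> | Hm0].
  - exists 0%nat; unfold grid in *; simpl in *; split; [lia | lra].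
  - destruct (Rle_dec x (grid a b n m)) as [Hle | Hgt].
    + destruct (IH ltac:(lia) Hle) as [k [Hk Hcell]]; exists k; split; [lia | exact Hcell].
    + exists m; split; [lia | lra].
Qed.

Theorem lemma9p2 (a b : R) (n : nat) (y y' : R -> R) :
  a < b -> (1 <= n)%nat -> C1_on a b y y' ->
  forall x : R, a <= x <= b ->
    Rabs (y x) <=
    maxk (fun k : nat =>
            / 2 * Rabs (y (grid a b n k) + y (grid a b n (S k)))
            + / 2 * sqrt ((b - a) / INR n)
                  * sqrt (RInt (fun t => (y' t) ^ 2) (grid a b n k) (grid a b n (S k))))
         (n - 1).
Proof.
  intros Hab Hn HC x Hx.
  destruct (grid_cell a b n x Hn Hx) as [k [Hk Hcell]].
  destruct (grid_bounds a b n k Hab Hk) as [Hleft Hright].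
  assert (Hstep : grid a b n (S k) - grid a b n k = (b - a) / INR n)
    by (rewrite grid_S by exact Hn; ring).
  assert (0 < (b - a) / INR n) by (apply Rdiv_lt_0_compat; [lra | apply lt_0_INR; lia]).
  eapply Rle_trans; [| apply (maxk_ge _ (n - 1) k); lia]; simpl.
  rewrite <- Hstep.
  apply (abs_le_half_sum_energy a b); [exact HC | exact Hleft | lra | exact Hright | exact Hcell].
Qed.
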